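(* Let $\tau>0$ and let $\tilde N^E_2,\tilde B_2\in\mathbb{C}^{n_2,n_2}$ be commuting matrices with $\tilde N^E_2$ nilpotent. If $\sigma(\tilde N^E_2,I,\tilde B_2)=\{\lambda\in\mathbb{C}:\det(\lambda\tilde N^E_2-I-e^{-\lambda\tau}\tilde B_2)=0\}\subseteq\mathbb{C}_-=\{\lambda:\mathrm{Re}\,\lambda<0\}$, then every eigenvalue of $\tilde B_2$ has modulus strictly less than $1$. Consequently, there exists a norm on $\mathbb{C}^{n_2}$ whose induced matrix norm satisfies $\|\tilde B_2\|<1$. *)

From mathcomp Require Import all_boot all_order all_algebra.
From mathcomp Require Import all_classical all_reals all_analysis.
From mathcomp.real_closed Require Import complex.

Set Implicit Arguments.
Unset Strict Implicit.
Unset Printing Implicit Defensive.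

Import Order.TTheory GRing.Theory Num.Theory.
Local Open Scope ring_scope.
Local Open Scope complex_scope.

Definition cexp (R : realType) (z : R[i]) : R[i] :=
  (expR (complex.Re z) * cos (complex.Im z)) +i* (expR (complex.Re z) * sin (complex.Im z)).

Definition delay_spectrum (R : realType) (n : nat) (tau : R)
    (N B : 'M[R[i]]_n) : set R[i] :=
  [set l | \det (l *: N - 1%:M - cexp (- (l * tau%:C)) *: B) = 0].

Definition Cminus (R : realType) : set R[i] := [set l | complex.Re l < 0].

Definition nilpotent_mx (F : pzRingType) (n : nat) (A : 'M[F]_n) : Prop :=
  exists k : nat, A ^+ k = 0.

Definition is_vec_norm (R : realType) (n : nat) (nu : 'cV[R[i]]_n -> R) : Prop :=
  [/\ forall x, 0 <= nu x,
      forall x, nu x = 0 -> x = 0,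
      forall (a : R[i]) x, nu (a *: x) = ComplexField.Normc.normc a * nu x
    & forall x y, nu (x + y) <= nu x + nu y].

Definition induced_norm (R : realType) (n : nat) (nu : 'cV[R[i]]_n -> R)
    (A : 'M[R[i]]_n) : R :=
  sup [set nu (A *m x) / nu x | x in [set x : 'cV[R[i]]_n | x != 0]].

(* Let [w B = mu w] with [w <> 0].  Since [N] commutes with [B] and is
   nilpotent, some [w N^j] is again an eigenvector of [B] for [mu] and is killed
   by [N], so it lies in the kernel of [l N - I - e^{-l tau} B] as soon as
   [e^{-l tau} = -1/mu].  A complex logarithm of [-1/mu] gives such an [l] with
   [Re l = ln |mu| / tau], and stability forces [|mu| < 1].
   For the norm, triangularize [P B P^-1 = T] (Schur); the diagonal of [T]
   consists of eigenvalues of [B], so [m := max_j |T_jj| < 1].  Take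
   [nu x := sum_i d^i |(P x)_i|]: for small [d] the weights damp the strictly
   lower part of [T], every weighted column sum of [T] is at most
   [(m + e) d^j], and so [nu (B x) <= (m + e) nu x] with [m + e < 1]. *)

From mathcomp Require Import all_boot all_order all_algebra.
From mathcomp Require Import all_classical all_reals all_analysis.
From mathcomp.real_closed Require Import complex.
From mathcomp Require Import mxred spectral.
From mathcomp Require Import ring lra.

Set Implicit Arguments.
Unset Strict Implicit.
Unset Printing Implicit Defensive.

Import Order.TTheory GRing.Theory Num.Theory.
Local Open Scope ring_scope.
Local Open Scope classical_set_scope.

Section CommutingNilpotent.
Variables (F : fieldType) (n : nat) (N B : 'M[F]_n).

Lemma nilpotent_row_last_nonzero (v : 'rV_n) k : v != 0 -> N ^+ k = 0 ->
  exists j, v *m N ^+ j != 0 /\ v *m N ^+ j *m N = 0.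
Proof.
move=> v0 Nk; have : v *m N ^+ k = 0 by rewrite Nk mulmx0.
elim: k {Nk} => [|k IHk].
  by rewrite expr0 mulmx1 => v_eq0; rewrite v_eq0 eqxx in v0.
have [/IHk //|vNk0 vNSk] := eqVneq (v *m N ^+ k) 0.
by exists k; rewrite -mulmxA mulmxE -exprSr.
Qed.

Hypothesis NB : N *m B = B *m N.

Lemma eigenvector_mulmx_commX (v : 'rV_n) mu j : v *m B = mu *: v ->
  v *m N ^+ j *m B = mu *: (v *m N ^+ j).
Proof.
have cBN : GRing.comm B N by rewrite /GRing.comm -!mulmxE.
by move=> vB; rewrite -mulmxA mulmxE -(commrX j cBN) -mulmxE mulmxA vB scalemxAl.
Qed.

Lemma nilpotent_common_eigenvector mu : nilpotent_mx N -> eigenvalue B mu ->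
  exists2 w : 'rV_n, w != 0 & w *m N = 0 /\ w *m B = mu *: w.
Proof.
move=> [k Nk] /eigenvalueP [v vB v0].
have [j [wj0 wjN]] := nilpotent_row_last_nonzero v0 Nk.
by exists (v *m N ^+ j); last split; last exact: eigenvector_mulmx_commX.
Qed.

End CommutingNilpotent.

Section ComplexModulus.
Variable R : realType.
Local Notation normc := (@ComplexField.Normc.normc R).

Lemma normc_ge0 (z : R[i]) : 0 <= normc z.
Proof. by case: z => a b; exact: sqrtr_ge0. Qed.

Lemma normc_gt0 (z : R[i]) : z != 0 -> 0 < normc z.
Proof.
move=> z0; rewrite lt_neqAle normc_ge0 andbT eq_sym.
by apply: contraNneq z0 => /ComplexField.Normc.eq0_normc ->.
Qed.

Lemma normc_sum (I : finType) (F : I -> R[i]) :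
  normc (\sum_i F i) <= \sum_i normc (F i).
Proof.
elim/big_ind2: _ => [|x1 x2 y1 y2 le1 le2|//].
  by rewrite ComplexField.Normc.normc0.
exact: le_trans (le_normcD _ _) (lerD le1 le2).
Qed.

End ComplexModulus.

Section ComplexExponential.
Variable R : realType.
Local Notation normc := (@ComplexField.Normc.normc R).
Local Open Scope complex_scope.

Lemma unit_circle_angle (x y : R) : x ^+ 2 + y ^+ 2 = 1 ->
  exists t, cos t = x /\ sin t = y.
Proof.
move=> xy1; have x11 : -1 <= x <= 1 by apply/andP; split; nra.
have [_ cos_acos] := acos_def x11.
have sin_acos_x : sin (acos x) = `|y|.
  by rewrite sin_acos // (_ : 1 - x ^+ 2 = y ^+ 2) ?sqrtr_sqr //; lra.
have [y0|y0] := leP 0 y.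
  by exists (acos x); rewrite cos_acos sin_acos_x ger0_norm.
by exists (- acos x); rewrite cosN sinN cos_acos sin_acos_x ltr0_norm ?opprK.
Qed.

Lemma cexp_onto (z : R[i]) : z != 0 ->
  exists2 w : R[i], cexp w = z & complex.Re w = ln (normc z).
Proof.
case: z => a b z0; set r := normc (a +i* b).
have r2 : r ^+ 2 = a ^+ 2 + b ^+ 2 by rewrite sqr_sqrtr // addr_ge0 // sqr_ge0.
have rp : 0 < r := normc_gt0 z0.
have r0 : r != 0 := lt0r_neq0 rp.
have [t [ct st]] : exists t, cos t = a / r /\ sin t = b / r.
  by apply: unit_circle_angle; rewrite !expr_div_n -mulrDl -r2 divff // expf_neq0.
exists (ln r +i* t) => //.
rewrite /cexp /= lnK ?posrE // ct st; congr (_ +i* _); field; exact: r0.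
Qed.

Lemma cexp_scaled_onto (tau : R) (z : R[i]) : tau != 0 -> z != 0 ->
  exists2 l : R[i], cexp (- (l * tau%:C)) = z &
    complex.Re l = - ln (normc z) / tau.
Proof.
move=> tau0 z0; have [[a b] ew Rew] := cexp_onto z0.
exists (Complex (- a / tau) (- b / tau)); last by rewrite -Rew.
rewrite -ew; congr cexp; apply/eqP; rewrite eq_complex /=.
by apply/andP; split; apply/eqP; field.
Qed.

End ComplexExponential.

Section DelaySpectrum.
Variable R : realType.
Local Notation normc := (@ComplexField.Normc.normc R).
Local Open Scope complex_scope.

Lemma delay_spectrum_eigen n (tau : R) (N B : 'M[R[i]]_n) (w : 'rV_n) mu l :
  w != 0 -> w *m N = 0 -> w *m B = mu *: w -> mu != 0 ->
  cexp (- (l * tau%:C)) = - mu^-1 -> delay_spectrum tau N B l.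
Proof.
move=> w0 wN wB mu0 el; rewrite /delay_spectrum /= el.
apply/eqP/det0P; exists w => //.
rewrite !mulmxBr -!scalemxAr mulmx1 wN wB scaler0 sub0r scalerA mulNr mulVf //.
by rewrite scaleN1r opprK addNr.
Qed.

Lemma delay_stable_eigenvalue_lt1 n (tau : R) (N B : 'M[R[i]]_n) :
  0 < tau -> N *m B = B *m N -> nilpotent_mx N ->
  delay_spectrum tau N B `<=` @Cminus R ->
  forall mu, eigenvalue B mu -> normc mu < 1.
Proof.
move=> tau0 NB nilN stable mu Bmu.
have [->|mu0] := eqVneq mu 0; first by rewrite ComplexField.Normc.normc0 ltr01.
have [w w0 [wN wB]] := nilpotent_common_eigenvector NB nilN Bmu.
have z0 : - mu^-1 != 0 by rewrite oppr_eq0 invr_eq0.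
have [l el Rel] := cexp_scaled_onto (lt0r_neq0 tau0) z0.
have := stable l (delay_spectrum_eigen w0 wN wB mu0 el).
rewrite /Cminus /= Rel normcN ComplexField.Normc.normcV.
rewrite lnV ?posrE ?normc_gt0 // opprK pmulr_llt0 ?invr_gt0 //.
by move=> ln_mu_lt0; rewrite ltNge; apply/negP => /ln_ge0; lra.
Qed.

End DelaySpectrum.

Section WeightedNorm.
Variables (R : realType) (n : nat) (w : 'I_n -> R).
Local Notation normc := (@ComplexField.Normc.normc R).

Definition wnorm1 (x : 'cV[R[i]]_n) : R := \sum_i w i * normc (x i 0).

Hypothesis w_gt0 : forall i, 0 < w i.

Lemma wnorm1_ge0 x : 0 <= wnorm1 x.
Proof. by apply: sumr_ge0 => i _; rewrite mulr_ge0 ?normc_ge0 ?ltW. Qed.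

Lemma wnorm1_eq0 x : wnorm1 x = 0 -> x = 0.
Proof.
move=> /eqP; rewrite psumr_eq0 => [/allP x0|i _]; last first.
  by rewrite mulr_ge0 ?normc_ge0 ?ltW.
apply/matrixP => i j; rewrite ord1 mxE; apply: ComplexField.Normc.eq0_normc.
have /implyP/(_ isT) := x0 i (mem_index_enum i).
by rewrite mulf_eq0 gt_eqF //= => /eqP.
Qed.

Lemma wnorm1Z a x : wnorm1 (a *: x) = normc a * wnorm1 x.
Proof.
rewrite /wnorm1 mulr_sumr; apply: eq_bigr => i _.
by rewrite mxE ComplexField.Normc.normcM mulrCA.
Qed.

Lemma wnorm1D x y : wnorm1 (x + y) <= wnorm1 x + wnorm1 y.
Proof.
rewrite /wnorm1 -big_split /=; apply: ler_sum => i _.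
by rewrite mxE -mulrDr ler_wpM2l ?le_normcD ?ltW.
Qed.

Lemma is_vec_norm_wnorm1_mul (P : 'M[R[i]]_n) : P \in unitmx ->
  is_vec_norm (fun x => wnorm1 (P *m x)).
Proof.
move=> Pu; split=> [x|x|a x|x y]; first exact: wnorm1_ge0.
- by move/wnorm1_eq0 => Px0; rewrite -(mulKmx Pu x) Px0 mulmx0.
- by rewrite -scalemxAr wnorm1Z.
- by rewrite mulmxDr wnorm1D.
Qed.

Lemma wnorm1_mulmx_le (A : 'M[R[i]]_n) c x :
    (forall j, \sum_i w i * normc (A i j) <= c * w j) ->
  wnorm1 (A *m x) <= c * wnorm1 x.
Proof.
move=> colA.
apply: le_trans (_ : \sum_i w i * \sum_k normc (A i k) * normc (x k 0) <= _).
  apply: ler_sum => i _; rewrite mxE; apply: ler_wpM2l; first exact: ltW.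
  apply: le_trans (normc_sum _) _.
  by apply: ler_sum => k _; rewrite ComplexField.Normc.normcM.
under eq_bigr do rewrite mulr_sumr.
rewrite exchange_big /= /wnorm1 mulr_sumr; apply: ler_sum => k _.
under eq_bigr do rewrite mulrA.
by rewrite -mulr_suml mulrA ler_wpM2r ?normc_ge0 ?colA.
Qed.

End WeightedNorm.

Lemma trig_mx_eigenvalue_diag (F : fieldType) n (A : 'M[F]_n) i :
  is_trig_mx A -> eigenvalue A (A i i).
Proof.
move=> At; rewrite eigenvalue_root_char char_poly_trig // /root horner_prod.
by rewrite (bigD1 i) //= hornerXsubC subrr mul0r.
Qed.

Section ComplexMatrices.
Variable R : realType.
Local Notation normc := (@ComplexField.Normc.normc R).

Lemma complex_trigonalizable n (A : 'M[R[i]]_n) : trigonalizable A.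
Proof.
case: n A => [|n] A.
  by exists 1%:M; [exact: unitmx1 | apply/is_trig_mxP => -[]].
by have [P Pu PA] := Schur A (ltn0Sn n); exists P => //; exact: unitarymx_unit.
Qed.

Lemma trig_mx_column_weights n (T : 'M[R[i]]_n) m e :
  is_trig_mx T -> (forall j, normc (T j j) <= m) -> 0 < e ->
  exists2 w : 'I_n -> R, (forall i, 0 < w i) &
    forall j, \sum_i w i * normc (T i j) <= (m + e) * w j.
Proof.
move=> /is_trig_mxP Tlow Tdiag e0.
pose K := \sum_i \sum_k normc (T i k).
have K0 : 0 <= K by do 2!apply: sumr_ge0 => ? _; rewrite normc_ge0.
pose d := e / (K + e).
have d0 : 0 < d by rewrite divr_gt0 //; lra.
have d_ge0 : 0 <= d := ltW d0.
have d1 : d <= 1 by rewrite ler_pdivrMr; lra.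
have dK : d * K <= e.
  by rewrite mulrAC ler_pdivrMr ?mulrDr; [nra | lra].
have colK j : \sum_(i | i != j) normc (T i j) <= K.
  apply: le_trans (_ : \sum_i normc (T i j) <= _).
    by rewrite [leRHS](bigD1 j) //= lerDr normc_ge0.
  apply: ler_sum => i _; rewrite [leRHS](bigD1 j) //= lerDl.
  by apply: sumr_ge0 => k _; rewrite normc_ge0.
exists (fun i => d ^+ i) => [i|j]; first exact: exprn_gt0.
rewrite (bigD1 j) //= mulrDl [_ * d ^+ j]mulrC.
rewrite lerD ?ler_wpM2l ?exprn_ge0 ?Tdiag //.
apply: le_trans (_ : \sum_(i | i != j) d ^+ j.+1 * normc (T i j) <= _).
  apply: ler_sum => i ij; have [ilt|jle] := ltnP i j.
    by rewrite Tlow // ComplexField.Normc.normc0 !mulr0.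
  rewrite ler_wpM2r ?normc_ge0 // ler_wiXn2l //.
  by rewrite ltn_neqAle jle andbT eq_sym.
rewrite -mulr_sumr exprSr -mulrA mulrC ler_wpM2r ?exprn_ge0 //.
by rewrite (le_trans _ dK) ?ler_wpM2l ?colK.
Qed.

Lemma induced_norm_le n (nu : 'cV[R[i]]_n -> R) (A : 'M[R[i]]_n) c :
  is_vec_norm nu -> 0 <= c -> (forall x, nu (A *m x) <= c * nu x) ->
  induced_norm nu A <= c.
Proof.
move=> [nu_ge0 nu_eq0 _ _] c0 nuA; rewrite /induced_norm.
set S := [set _ | _ in _].
(* For [n = 0] the set is empty and [sup set0 = 0]: hence [0 <= c]. *)
have [->|/set0P S0] := eqVneq S set0; first by rewrite sup0.
apply: ge_sup => // _ [x /= x0 <-].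
have nux : 0 < nu x.
  by rewrite lt_neqAle nu_ge0 andbT eq_sym; apply: contraNneq x0 => /nu_eq0 ->.
by rewrite ler_pdivrMr ?nuA.
Qed.

Lemma induced_norm_lt1 n (B : 'M[R[i]]_n) :
  (forall mu, eigenvalue B mu -> normc mu < 1) ->
  exists nu, is_vec_norm nu /\ induced_norm nu B < 1.
Proof.
move=> Bspec; have [P Pu Ttrig] := complex_trigonalizable B.
set T := conjmx P B in Ttrig.
have PB : P *m B = T *m P by apply: similarPp (stablemx_unit B Pu) (eqxx T).
have Tdiag j : normc (T j j) < 1.
  apply/Bspec/(eigenvalue_conjmx (stablemx_unit B Pu)).
    by rewrite row_free_unit.
  exact: trig_mx_eigenvalue_diag.
pose m := \big[Num.max/0]_j normc (T j j).
have m0 : 0 <= m := bigmax_ge_id _ _ _ _.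
have m1 : m < 1 by apply: bigmax_lt.
have Tm j : normc (T j j) <= m by exact: le_bigmax.
have e0 : 0 < (1 - m) / 2 by lra.
have [w w_gt0 colT] := trig_mx_column_weights Ttrig Tm e0.
exists (fun x => wnorm1 w (P *m x)); split; first exact: is_vec_norm_wnorm1_mul.
apply: (@le_lt_trans _ _ (m + (1 - m) / 2)); last lra.
apply: induced_norm_le; [exact: is_vec_norm_wnorm1_mul | lra | move=> x].
by rewrite mulmxA PB -mulmxA; exact: wnorm1_mulmx_le colT.
Qed.

End ComplexMatrices.

Theorem lemma7 (R : realType) (n2 : nat) (tau : R) (N B : 'M[R[i]]_n2) :
  0 < tau ->
  N *m B = B *m N ->
  nilpotent_mx N ->
  delay_spectrum tau N B `<=` @Cminus R ->
  (forall mu : R[i], eigenvalue B mu -> `|mu| < 1) /\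
  (exists nu : 'cV[R[i]]_n2 -> R, is_vec_norm nu /\ induced_norm nu B < 1).
Proof.
move=> tau0 NB nilN stable.
have Bspec := delay_stable_eigenvalue_lt1 tau0 NB nilN stable.
split; last exact: induced_norm_lt1.
by move=> mu /Bspec; rewrite -ltcR.
Qed.
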